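(* Let $g\ge1$, $0\le g'<g$, $g''=g-g'$, and fix Siegel sets $\mathfrak{F}_g(u)\subset\mathfrak{S}_g$, $\mathfrak{F}_{g'}(u)\subset\mathfrak{S}_{g'}$, $\mathfrak{F}^+_{g''}(u)\subset\mathrm{Sym}^+(g'',\mathbb{R})$. Let $(\tau',t)\in\mathfrak{F}_{g'}(u)\times\mathfrak{F}^+_{g''}(u)$ be fixed, and let $V=V_X+iV_Y\in T_\tau\mathfrak{S}_g$ be a vertical tangent vector (i.e. $d\pi_{g'}(V)=0$) at a point $\tau\in\pi_{g'}^{-1}(\tau',t)\cap\mathfrak{F}_g(u)$. Then $$\|V\|_\tau^2=\operatorname{tr}\big(t^{-1}\,{}^tV'''_X(Y')^{-1}V'''_X\big)+\operatorname{tr}\big(t^{-1}\,{}^tV'''_Y(Y')^{-1}V'''_Y\big)+\tfrac12\operatorname{tr}\big(t^{-1}\tilde V''_X\,t^{-1}\tilde V''_X\big),$$ where $\tilde V''_X:=V''_X-{}^tV'''_X(Y')^{-1}Y'''-{}^tY'''(Y')^{-1}V'''_X\in\mathrm{Sym}(g'',\mathbb{R})$.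
   Context: $\mathfrak{S}_g=\{\tau\in\mathrm{Sym}(g,\mathbb{C}):\operatorname{Im}\tau>0\}$, $\tau=X+iY$. The Weil–Petersson norm of $V=V_X+iV_Y\in\mathrm{Sym}(g,\mathbb{C})\cong T_\tau\mathfrak{S}_g$ is $\|V\|_\tau^2=\frac12\big(\operatorname{tr}(Y^{-1}V_XY^{-1}V_X)+\operatorname{tr}(Y^{-1}V_YY^{-1}V_Y)\big)$. Block decompositions: $\tau=\begin{pmatrix}\tau'&\tau'''\\{}^t\tau'''&\tau''\end{pmatrix}$ with $\tau'$ of size $g'\times g'$ and $\tau''$ of size $g''\times g''$; the same for $X,Y,V_X,V_Y$ (blocks $V'_X,V'''_X,V''_X$, etc.). The map $\pi_{g'}:\mathfrak{S}_g\to\mathfrak{S}_{g'}\times\mathrm{Sym}^+(g'',\mathbb{R})$ is $\pi_{g'}(\tau)=(\tau',\,Y''-{}^tY'''(Y')^{-1}Y''')$. Jacobi decomposition $Y=LDL^t$, $L=(l_{ij})$ lower triangular unipotent, $D=\mathrm{diag}(d_1,\dots,d_g)$; Siegel sets $\mathfrak{F}_g(u)=\{X+iY: |x_{ij}|<u,\ |l_{ij}|<u,\ 1<ud_1,\ d_i<ud_{i+1}\}$ and $\mathfrak{F}^+_g(u)=\{Y\in\mathrm{Sym}^+(g,\mathbb{R}): |l_{ij}|<u,\ 1<ud_1,\ d_i<ud_{i+1}\}$. *)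

From HB Require Import structures.
From mathcomp Require Import all_boot all_order all_algebra.
From mathcomp Require Import all_classical all_reals all_analysis.
Set Implicit Arguments. Unset Strict Implicit. Unset Printing Implicit Defensive.
Import Order.TTheory GRing.Theory Num.Theory.
Import numFieldNormedType.Exports.
Local Open Scope ring_scope.

Definition symmx (R : realType) (n : nat) (A : 'M[R]_n) : Prop := A^T = A.

Definition posdefmx (R : realType) (n : nat) (Y : 'M[R]_n) : Prop :=
  symmx Y /\ forall v : 'rV[R]_n, v != 0 -> 0 < (v *m Y *m v^T) 0 0.

(* A point tau = X + iY of the Siegel upper half space S_n, encoded by the
   pair (X, Y) of real symmetric matrices with Y positive definite. *)
Definition siegel_pt (R : realType) (n : nat) (X Y : 'M[R]_n) : Prop :=
  symmx X /\ posdefmx Y.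

(* Jacobi decomposition Y = L D L^t: L lower triangular unipotent,
   D = diag(d_1,...,d_n) (indices shifted to 0,...,n-1). *)
Definition jacobi_dec (R : realType) (n : nat) (Y L : 'M[R]_n) (d : 'rV[R]_n)
  : Prop :=
  (forall i j : 'I_n, (i < j)%N -> L i j = 0) /\
  (forall i : 'I_n, L i i = 1) /\
  Y = L *m diag_mx d *m L^T.

Definition siegel_Y_cond (R : realType) (n : nat) (u : R) (Y : 'M[R]_n) : Prop :=
  exists (L : 'M[R]_n) (d : 'rV[R]_n),
    jacobi_dec Y L d /\
    (forall i j : 'I_n, (j < i)%N -> `|L i j| < u) /\
    (forall i : 'I_n, val i = 0%N -> 1 < u * d 0 i) /\
    (forall i j : 'I_n, val j = (val i).+1 -> d 0 i < u * d 0 j).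

Definition siegel_set (R : realType) (n : nat) (u : R) (X Y : 'M[R]_n) : Prop :=
  siegel_pt X Y /\ (forall i j : 'I_n, `|X i j| < u) /\ siegel_Y_cond u Y.

Definition siegel_set_pos (R : realType) (n : nat) (u : R) (Y : 'M[R]_n) : Prop :=
  posdefmx Y /\ siegel_Y_cond u Y.

Definition piY (R : realType) (g1 g2 : nat) (Y : 'M[R]_(g1 + g2)) : 'M[R]_g2 :=
  drsubmx Y - (ursubmx Y)^T *m invmx (ulsubmx Y) *m ursubmx Y.

(* d pi_{g'}(V) = 0 at tau = X + iY, for V = VX + i VY: the derivative at s = 0
   of s |-> pi_{g'}(tau + s V) vanishes (componentwise: real and imaginary
   parts of tau', and the Sym^+ component). *)
Definition dpi_zero (R : realType) (g1 g2 : nat) (X Y VX VY : 'M[R]_(g1 + g2))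
  : Prop :=
  let f1 := fun s : R => ulsubmx (X + s *: VX) in
  let f2 := fun s : R => ulsubmx (Y + s *: VY) in
  let f3 := fun s : R => piY (Y + s *: VY) in
  [/\ derivable f1 0 1 /\ 'D_1 f1 0 = 0,
      derivable f2 0 1 /\ 'D_1 f2 0 = 0 &
      derivable f3 0 1 /\ 'D_1 f3 0 = 0].

Definition wp_norm2 (R : realType) (n : nat) (Y VX VY : 'M[R]_n) : R :=
  2^-1 * (\tr (invmx Y *m VX *m invmx Y *m VX) + \tr (invmx Y *m VY *m invmx Y *m VY)).

(* With A = Y', B = Y''' and t = Y'' - tB A^{-1} B the Schur complement, the block LDU
   factorisation gives Y^{-1} = U diag(A^{-1}, t^{-1}) tU with U = [[1, -A^{-1} B], [0, 1]].
   Conjugating a symmetric V with V' = 0 by U leaves [[0, C], [tC, W]] where C = V''' and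
   W = V'' - tC A^{-1} B - tB A^{-1} C, so that
   tr(Y^{-1} V Y^{-1} V) = 2 tr(t^{-1} tC A^{-1} C) + tr(t^{-1} W t^{-1} W).
   Along the line Y + sV, the Schur complement is the quadratic t + s W - s^2 tC A^{-1} C;
   hence a vertical vector has V'_X = V'_Y = 0 and W_Y = 0, and the formula follows. *)
From HB Require Import structures.
From mathcomp Require Import all_boot all_order all_algebra.
From mathcomp Require Import all_classical all_reals all_analysis.
From mathcomp Require Import ring.
Set Implicit Arguments. Unset Strict Implicit. Unset Printing Implicit Defensive.
Import Order.TTheory GRing.Theory Num.Theory.
Import numFieldNormedType.Exports.
Local Open Scope ring_scope.

Section SchurComplement.
Variables (R : comUnitRingType) (m n : nat).
Implicit Types (Y V : 'M[R]_(m + n)).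

Definition schur_compl Y : 'M[R]_n :=
  drsubmx Y - dlsubmx Y *m invmx (ulsubmx Y) *m ursubmx Y.

Lemma invmx_schur Y :
  ulsubmx Y \in unitmx -> schur_compl Y \in unitmx ->
  invmx Y = block_mx 1%:M (- (invmx (ulsubmx Y) *m ursubmx Y)) 0 1%:M
            *m block_mx (invmx (ulsubmx Y)) 0 0 (invmx (schur_compl Y))
            *m block_mx 1%:M 0 (- (dlsubmx Y *m invmx (ulsubmx Y))) 1%:M.
Proof.
move=> uA uS; set Z := _ *m _ *m _.
have YZ : Y *m Z = 1%:M.
  rewrite -{1}(submxK Y) /Z !mulmxA !mulmx_block.
  rewrite ?(mulmx0, mul0mx, mulmx1, mul1mx, addr0, add0r) !mulmxN !mulmxA.
  rewrite mulmxV // mul1mx addNr !mul0mx ?(addr0, add0r) subr0.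
  by rewrite [- _ + _]addrC mulmxV // mul1mx addrN -scalar_mx_block.
have [uY _] := mulmx1_unit YZ.
by rewrite -[RHS]mul1mx -(mulVmx uY) -mulmxA YZ mulmx1.
Qed.

Definition dpiY Y V : 'M[R]_n :=
  drsubmx V - (ursubmx V)^T *m invmx (ulsubmx Y) *m ursubmx Y
            - (ursubmx Y)^T *m invmx (ulsubmx Y) *m ursubmx V.

Lemma mxtrace_invmx_vertical Y V :
  dlsubmx Y = (ursubmx Y)^T ->
  ulsubmx Y \in unitmx -> schur_compl Y \in unitmx ->
  ulsubmx V = 0 -> dlsubmx V = (ursubmx V)^T ->
  let P := invmx (ulsubmx Y) in let Q := invmx (schur_compl Y) in
  \tr (invmx Y *m V *m invmx Y *m V) =
    \tr (Q *m (ursubmx V)^T *m P *m ursubmx V) *+ 2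
    + \tr (Q *m dpiY Y V *m Q *m dpiY Y V).
Proof.
move=> sY uA uS V0 sV P Q.
rewrite (invmx_schur uA uS) -/P -/Q; set C := ursubmx V; set W := dpiY Y V.
set U := block_mx 1%:M _ 0 1%:M; set D := block_mx P 0 0 Q.
set L := block_mx 1%:M 0 _ 1%:M.
have LVU : L *m V *m U = block_mx 0 C C^T W.
  rewrite -(submxK V) V0 sV /L /U sY !mulmx_block.
  rewrite ?(mulmx0, mul0mx, mulmx1, mul1mx, addr0, add0r).
  by rewrite mulmxN mulNmx !mulmxA addrC [- _ + drsubmx V]addrC addrAC.
rewrite -!mulmxA mxtrace_mulC !mulmxA.
have -> : D *m L *m V *m U *m D *m L *m V *m U =
          D *m (L *m V *m U) *m D *m (L *m V *m U) by rewrite !mulmxA.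
rewrite LVU /D !mulmx_block ?(mulmx0, mul0mx, mulmx1, mul1mx, addr0, add0r).
rewrite mxtrace_block mxtraceD addrA mulr2n; congr (_ + _ + _).
by rewrite -[P *m C *m Q *m C^T]mulmxA mxtrace_mulC !mulmxA.
Qed.

Lemma ulsubmxDZ Y V s : ulsubmx (Y + s *: V) = ulsubmx Y + s *: ulsubmx V.
Proof. by apply/matrixP => i j; rewrite !mxE. Qed.

Lemma ursubmxDZ Y V s : ursubmx (Y + s *: V) = ursubmx Y + s *: ursubmx V.
Proof. by apply/matrixP => i j; rewrite !mxE. Qed.

Lemma drsubmxDZ Y V s : drsubmx (Y + s *: V) = drsubmx Y + s *: drsubmx V.
Proof. by apply/matrixP => i j; rewrite !mxE. Qed.

End SchurComplement.

Section QuadraticPath.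
Variables (R : realType) (p q : nat).

Lemma is_deriveZl (f : R -> R) (K : 'M[R]_(p, q)) (x df : R) :
  is_derive x 1 f df -> is_derive x 1 (fun s => f s *: K) (df *: K).
Proof.
move=> hf; have d : differentiable f x by apply/derivable1_diffP; exact: ex_derive.
have dZ : differentiable (fun s => f s *: K) x by exact: differentiableZl.
apply: DeriveDef; first exact/derivable1_diffP.
by rewrite deriveE // diffZl //= -deriveE // derive_val.
Qed.

Lemma derive1_quadratic0 (K0 K1 K2 : 'M[R]_(p, q)) :
  'D_1 (fun s : R => K0 + s *: K1 + s ^+ 2 *: K2) 0 = K1.
Proof.
have h1 : is_derive (0 : R) 1 (fun s : R => s *: K1) (1 *: K1).
  by apply: is_deriveZl; exact: is_derive_id.
have h2 : is_derive (0 : R) 1 (fun s : R => s ^+ 2 *: K2) (0 *: K2).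
  apply: is_deriveZl; have := is_deriveX 2 (is_derive_id (0 : R) 1).
  by rewrite expr1 mulr0 scale0r.
have [_ ->] := is_deriveD (is_deriveD (is_derive_cst K0 (0 : R) 1) h1) h2.
by rewrite scale1r scale0r add0r addr0.
Qed.

Lemma derive1_affine0 (K0 K1 : 'M[R]_(p, q)) :
  'D_1 (fun s : R => K0 + s *: K1) 0 = K1.
Proof.
have -> : (fun s : R => K0 + s *: K1) = (fun s => K0 + s *: K1 + s ^+ 2 *: 0).
  by apply/funext => s; rewrite scaler0 addr0.
exact: derive1_quadratic0.
Qed.

End QuadraticPath.

Lemma piY_line (R : realType) (m n : nat) (Y V : 'M[R]_(m + n)) (s : R) :
  ulsubmx V = 0 ->
  piY (Y + s *: V) = piY Y + s *: dpiY Y V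
    + s ^+ 2 *: - ((ursubmx V)^T *m invmx (ulsubmx Y) *m ursubmx V).
Proof.
move=> V0; rewrite /piY /dpiY ulsubmxDZ ursubmxDZ drsubmxDZ V0 scaler0 addr0.
set P := invmx _; set B := ursubmx Y; set C := ursubmx V.
rewrite !linearD !linearZ /= !mulmxDl -!scalemxAl.
set a := B^T *m P *m B; set b := C^T *m P *m B; set c := B^T *m P *m C.
set d := C^T *m P *m C; set e := drsubmx V; set f := drsubmx Y.
by apply/matrixP => i j; rewrite !mxE; ring.
Qed.

Lemma dpi_zero_vertical (R : realType) (m n : nat) (X Y VX VY : 'M[R]_(m + n)) :
  dpi_zero X Y VX VY ->
  [/\ ulsubmx VX = 0, ulsubmx VY = 0 & dpiY Y VY = 0].
Proof.
case=> [[_ dX] [_ dY] [_ dS]].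
have VX0 : ulsubmx VX = 0.
  by rewrite -dX (funext (fun s => ulsubmxDZ X VX s)) derive1_affine0.
have VY0 : ulsubmx VY = 0.
  by rewrite -dY (funext (fun s => ulsubmxDZ Y VY s)) derive1_affine0.
split=> //.
by rewrite -dS (funext (fun s => piY_line Y s VY0)) derive1_quadratic0.
Qed.

Lemma posdefmx_unit (R : realType) (k : nat) (A : 'M[R]_k) :
  posdefmx A -> A \in unitmx.
Proof.
case=> _ pA; rewrite unitmxE unitfE; apply/negP => /det0P [v v0 vA].
by have := pA v v0; rewrite vA mul0mx mxE ltxx.
Qed.

Lemma symmx_dlsubmx (R : realType) (m n : nat) (A : 'M[R]_(m + n)) :
  symmx A -> dlsubmx A = (ursubmx A)^T.
Proof. by move=> sA; rewrite trmx_ursub sA. Qed.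

Theorem lemma3p12 (R : realType) (g1 g2 : nat) (u : R)
  (Xp Yp : 'M[R]_g1) (t : 'M[R]_g2)
  (X Y VX VY : 'M[R]_(g1 + g2)) :
  (0 < g2)%N ->
  siegel_set u Xp Yp ->
  siegel_set_pos u t ->
  siegel_set u X Y ->
  ulsubmx X = Xp -> ulsubmx Y = Yp -> piY Y = t ->
  symmx VX -> symmx VY ->
  dpi_zero X Y VX VY ->
  wp_norm2 Y VX VY =
    \tr (invmx t *m (ursubmx VX)^T *m invmx Yp *m ursubmx VX)
  + \tr (invmx t *m (ursubmx VY)^T *m invmx Yp *m ursubmx VY)
  + 2^-1 * \tr (invmx t
        *m (drsubmx VX - (ursubmx VX)^T *m invmx Yp *m ursubmx Y
            - (ursubmx Y)^T *m invmx Yp *m ursubmx VX)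
        *m invmx t
        *m (drsubmx VX - (ursubmx VX)^T *m invmx Yp *m ursubmx Y
            - (ursubmx Y)^T *m invmx Yp *m ursubmx VX)).
Proof.
move=> _ [[_ pYp] _] [pt _] [[_ [sY _]] _] _ eYp et sVX sVY dpi0.
have [VX0 VY0 WY0] := dpi_zero_vertical dpi0.
have sYdl := symmx_dlsubmx sY.
have eS : schur_compl Y = t by rewrite /schur_compl sYdl; exact: et.
have uA : ulsubmx Y \in unitmx by rewrite eYp posdefmx_unit.
have uS : schur_compl Y \in unitmx by rewrite eS posdefmx_unit.
rewrite /wp_norm2.
rewrite (mxtrace_invmx_vertical sYdl uA uS VX0 (symmx_dlsubmx sVX)).
rewrite (mxtrace_invmx_vertical sYdl uA uS VY0 (symmx_dlsubmx sVY)).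
rewrite WY0 mulmx0 mxtrace0 addr0 eS eYp /dpiY eYp.
by rewrite !mulr2n; field.
Qed.
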